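(* Let $f\colon\mathbb{R}^n\to\mathbb{R}$ be convex and differentiable with $\|\nabla f(x)-\nabla f(y)\|\le L\|x-y\|$ for all $x,y$ (Euclidean norm, $L>0$), and assume $f$ has a minimizer $x_\star$; write $f_\star=f(x_\star)$. Let $\{\theta_k\}_{k=0}^\infty$ be a positive sequence with $\theta_0=1$ and $0\le\theta_{k+1}^2-\theta_{k+1}\le\theta_k^2$ for $k=0,1,\dots$, and set $\theta_{-1}=0$. Let $\{\varphi_k\}_{k=0}^\infty$ be a positive sequence with $0\le\varphi_k^2-\varphi_k\le2\theta_{k-1}^2$ for $k=0,1,\dots$. Given $x_0\in\mathbb{R}^n$, let $y_0=x_0$, $\tilde x_0=x_0$, and for $k=0,1,\dots$ \[ y_{k+1}=x_k-\tfrac1L\nabla f(x_k),\qquad x_{k+1}=y_{k+1}+\frac{\theta_k-1}{\theta_{k+1}}(y_{k+1}-y_k)+\frac{\theta_k}{\theta_{k+1}}(y_{k+1}-x_k), \] \[ \tilde x_{k+1}=y_{k+1}+\frac{\theta_k-1}{\varphi_{k+1}}(y_{k+1}-y_k)+\frac{\theta_k}{\varphi_{k+1}}(y_{k+1}-x_k). \] Then for $k=0,1,\dots$, \[ f(\tilde x_k)-f_\star\le\frac{L\|x_0-x_\star\|^2}{2\varphi_k^2}. \]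
   Context: The $\tilde x_k$ are the secondary iterates of OGM with the ''last-step modification''. $\|\cdot\|$ is the Euclidean norm. *)

From HB Require Import structures.
From mathcomp Require Import all_boot all_order all_algebra.
From mathcomp Require Import all_classical all_reals all_analysis.
Set Implicit Arguments. Unset Strict Implicit. Unset Printing Implicit Defensive.
Import Order.TTheory GRing.Theory Num.Theory.
Import numFieldNormedType.Exports.
Local Open Scope ring_scope.

(* Euclidean inner product and Euclidean norm (the analysis library's norm on
   'rV is the max norm, so we define the Euclidean one explicitly). *)
Definition dotv (R : realType) (n : nat) (u v : 'rV[R]_n) : R :=
  \sum_(i < n) u 0 i * v 0 i.
Definition enorm (R : realType) (n : nat) (u : 'rV[R]_n) : R :=
  Num.sqrt (dotv u u).

Definition convex_fun (R : realType) (n : nat) (f : 'rV[R]_n -> R) : Prop :=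
  forall (x y : 'rV[R]_n) (t : R), 0 <= t -> t <= 1 ->
    f (t *: x + (1 - t) *: y) <= t * f x + (1 - t) * f y.

Definition is_gradient (R : realType) (n : nat) (f : 'rV[R]_n -> R)
  (g : 'rV[R]_n -> 'rV[R]_n) : Prop :=
  forall x : 'rV[R]_n, differentiable f x /\ forall h, 'd f x h = dotv (g x) h.

Definition prev_theta (R : realType) (theta : nat -> R) (k : nat) : R :=
  if k is k'.+1 then theta k' else 0.

Fixpoint ogm_xy (R : realType) (n : nat) (g : 'rV[R]_n -> 'rV[R]_n) (L : R)
  (theta : nat -> R) (x0 : 'rV[R]_n) (k : nat) : 'rV[R]_n * 'rV[R]_n :=
  match k with
  | 0 => (x0, x0)
  | k'.+1 =>
      let xy := ogm_xy g L theta x0 k' in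
      let x := xy.1 in let y := xy.2 in
      let y' := x - L^-1 *: g x in
      (y' + ((theta k' - 1) / theta k'.+1) *: (y' - y)
          + (theta k' / theta k'.+1) *: (y' - x), y')
  end.

Definition ogm_xt (R : realType) (n : nat) (g : 'rV[R]_n -> 'rV[R]_n) (L : R)
  (theta phi : nat -> R) (x0 : 'rV[R]_n) (k : nat) : 'rV[R]_n :=
  match k with
  | 0 => x0
  | k'.+1 =>
      let xy := ogm_xy g L theta x0 k' in
      let x := xy.1 in let y := xy.2 in
      let y' := x - L^-1 *: g x in
      y' + ((theta k' - 1) / phi k'.+1) *: (y' - y)
         + (theta k' / phi k'.+1) *: (y' - x)
  end.

From HB Require Import structures.
From mathcomp Require Import all_boot all_order all_algebra.
From mathcomp Require Import all_classical all_reals all_analysis.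
From mathcomp Require Import ring lra.
Import Order.TTheory GRing.Theory Num.Theory.
Import numFieldNormedType.Exports.
Local Open Scope ring_scope.

(* The only analytic input is the cocoercivity inequality
     f u >= f v + <g v, u - v> + |g u - g v|^2 / (2 L),
   which follows from first-order convexity and the quadratic upper bound
   |f (x + d) - f x - <g x, d>| <= L/2 |d|^2 given by the Lipschitz gradient.
   With z_k = theta_k x_k - (theta_k - 1) y_k the recursion becomes
   z_(k+1) = z_k - (2 theta_k / L) g x_k, and the potential
     2 theta_(k-1)^2 (f x_(k-1) - f_* - |g x_(k-1)|^2 / (2 L)) + L/2 |z_k - x_*|^2
   is nonincreasing (a nonnegative combination of three cocoercivity
   inequalities), so it stays below L/2 |x_0 - x_*|^2.  Finally
   phi_k xt_k = (phi_k - 1) y_k + z_k, and two more cocoercivity inequalities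
   bound phi_k^2 (f xt_k - f_* ) by (phi_k^2 - phi_k)(...) + L/2 |z_k - x_*|^2,
   which is at most the potential because phi_k^2 - phi_k <= 2 theta_(k-1)^2. *)

(* Reduces an identity between linear combinations of inner products to a
   coordinatewise ring identity. *)
Ltac expand_dotv :=
  rewrite /dotv ?(mulrBr, mulrBl);
  do 3 rewrite ?mulr_sumr ?mulr_suml -?sumrN -?big_split /=;
  apply: eq_bigr => i _; rewrite !mxE.

Section Euclidean.
Context {R : realType} {n : nat}.
Implicit Types u a b : 'rV[R]_n.

Lemma dotvv_ge0 u : 0 <= dotv u u.
Proof. by apply: sumr_ge0 => i _; rewrite -expr2 sqr_ge0. Qed.

Lemma dotvv_le0 u : (dotv u u <= 0) = (u == 0).
Proof.
apply/idP/eqP => [uu_le0|->]; last by rewrite /dotv big1 // => i _; rewrite mxE mulr0.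
have /eqP : dotv u u = 0 by apply/eqP; rewrite eq_le uu_le0 dotvv_ge0.
rewrite /dotv psumr_eq0 => [/allP u0|i _]; last by rewrite -expr2 sqr_ge0.
apply/rowP => j; rewrite mxE.
by have /= := u0 j (mem_index_enum _); rewrite mulf_eq0 orbb => /eqP.
Qed.

Lemma dotv0l u : dotv 0 u = 0.
Proof. by rewrite /dotv big1 // => i _; rewrite mxE mul0r. Qed.

Lemma sqr_enorm u : enorm u ^+ 2 = dotv u u.
Proof. by rewrite /enorm sqr_sqrtr // dotvv_ge0. Qed.

Lemma enormZ (c : R) u : enorm (c *: u) = `|c| * enorm u.
Proof.
rewrite /enorm -sqrtr_sqr -sqrtrM ?sqr_ge0 //; congr Num.sqrt.
by expand_dotv; ring.
Qed.

Lemma abs_dotv_le a b (c : R) : 0 < c ->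
  dotv a a <= c ^+ 2 * dotv b b -> `|dotv a b| <= c * dotv b b.
Proof.
move=> c_gt0 ab_le.
have minus_ge0 := dotvv_ge0 (a - c *: b).
have plus_ge0 := dotvv_ge0 (a + c *: b).
have minusE : dotv (a - c *: b) (a - c *: b)
    = dotv a a - 2 * c * dotv a b + c ^+ 2 * dotv b b by expand_dotv; ring.
have plusE : dotv (a + c *: b) (a + c *: b)
    = dotv a a + 2 * c * dotv a b + c ^+ 2 * dotv b b by expand_dotv; ring.
rewrite ler_norml; apply/andP; split; nra.
Qed.

End Euclidean.

Lemma ler_increment_of_derive {R : realType} (F dF : R -> R) (a b : R) :
  (forall t : R, is_derive t 1 F (dF t)) ->
  (forall t, 0 < t < 1 -> dF t <= a + 2 * t * b) -> F 1 - F 0 <= a + b.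
Proof.
move=> F_der dF_le.
pose H : R -> R := F - (fun s : R => s * a + s ^+ 2 * b).
have H_der (t : R) : is_derive t 1 H (dF t - (a + 2 * t * b)).
  apply: is_deriveB; apply: is_derive_eq.
  by rewrite !scaler0 !add0r /GRing.scale /=; ring.
have H_cont : {within `[0, 1], continuous H}%classic.
  apply: continuous_subspaceT => t; apply: differentiable_continuous.
  by apply/derivable1_diffP; case: (H_der t).
have [c c01 H_incr] := MVT ltr01 (fun t _ => H_der t) H_cont.
move: c01; rewrite in_itv /= => /dF_le c_le.
have : H 1 - H 0 <= 0 by rewrite H_incr subr0 mulr1 subr_le0.
have HE s : H s = F s - (s * a + s ^+ 2 * b) by [].
by rewrite !HE !mul0r expr0n mul0r expr1n !mul1r; lra.
Qed.

Lemma ler_of_le_addr_small {R : realType} (a s K : R) : 0 <= K ->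
  (forall t, 0 < t <= 1 -> a <= s + t * K) -> a <= s.
Proof.
move=> K_ge0 small; apply/ler_addgt0Pr => e e_gt0.
have eK_gt0 : 0 < e + K by lra.
pose t := e / (e + K).
have t01 : 0 < t <= 1 by rewrite divr_gt0 //= ler_pdivrMr // mul1r lerDl.
apply: le_trans (small t t01) _; rewrite lerD2l /t mulrAC ler_pdivrMr //.
by rewrite ler_pM2l //; lra.
Qed.

Lemma ge1_of_sqr_sub_ge0 {R : realType} (t : R) :
  0 < t -> 0 <= t ^+ 2 - t -> 1 <= t.
Proof.
by move=> t_gt0; rewrite -subr_ge0 -(pmulr_rge0 _ t_gt0); congr (_ <= _); ring.
Qed.

Section OptimizedGradient.
Context {R : realType} {n : nat} {f : 'rV[R]_n -> R} {g : 'rV[R]_n -> 'rV[R]_n}.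
Context {L : R} {xs : 'rV[R]_n}.
Hypothesis f_convex : convex_fun f.
Hypothesis f_grad : is_gradient f g.
Hypothesis L_gt0 : 0 < L.
Hypothesis g_lipschitz : forall x y, enorm (g x - g y) <= L * enorm (x - y).
Hypothesis xs_min : forall x, f xs <= f x.

Lemma is_derive_line (x d : 'rV[R]_n) (t : R) :
  is_derive t 1 (fun s : R => f (x + s *: d)) (dotv (g (x + t *: d)) d).
Proof.
have [f_diff f_diffE] := f_grad (x + t *: d).
have line_diff : is_diff t (cst x + *:%R^~ d) (0 + *:%R^~ d) by exact: is_diffD.
have comp_diff :
    is_diff t (f \o (cst x + *:%R^~ d)) ('d f (x + t *: d) \o (0 + *:%R^~ d)).
  exact: is_diff_comp.
apply: DeriveDef; first exact: diff_derivable.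
by rewrite deriveE // diff_val /= f_diffE add0r scale1r.
Qed.

Lemma abs_grad_line_sub_le (x d : 'rV[R]_n) (c : R) : 0 <= c ->
  `|dotv (g (x + c *: d)) d - dotv (g x) d| <= L * c * dotv d d.
Proof.
rewrite le_eqVlt => /predU1P[<-|c_gt0].
  by rewrite scale0r addr0 subrr normr0 mulr0 mul0r.
have -> : dotv (g (x + c *: d)) d - dotv (g x) d = dotv (g (x + c *: d) - g x) d.
  by expand_dotv; ring.
apply: abs_dotv_le; first exact: mulr_gt0.
have lip := g_lipschitz (x + c *: d) x.
rewrite addrAC subrr add0r enormZ (ger0_norm (ltW c_gt0)) mulrA in lip.
by rewrite -!sqr_enorm -exprMn !expr2; apply: ler_pM; rewrite ?sqrtr_ge0.
Qed.

Lemma abs_taylor1_le (x d : 'rV[R]_n) :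
  `|f (x + d) - f x - dotv (g x) d| <= L / 2 * dotv d d.
Proof.
set a := dotv (g x) d; set b := L / 2 * dotv d d.
have slope_le t : 0 < t < 1 ->
    - (2 * t * b) <= dotv (g (x + t *: d)) d - a <= 2 * t * b.
  move=> /andP[t_gt0 _]; rewrite -ler_norml.
  have -> : 2 * t * b = L * t * dotv d d by rewrite /b; field.
  exact/abs_grad_line_sub_le/ltW.
have upper : f (x + 1 *: d) - f (x + 0 *: d) <= a + b.
  apply: ler_increment_of_derive (is_derive_line x d) _ => t /slope_le.
  by move=> /andP[_]; lra.
have lower : - f (x + 1 *: d) - - f (x + 0 *: d) <= - a + b.
  apply: ler_increment_of_derive (fun t => is_deriveN (is_derive_line x d t)) _.
  by move=> t /slope_le /andP[]; lra.
rewrite scale1r scale0r addr0 in upper lower.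
by rewrite ler_norml; apply/andP; split; lra.
Qed.

Lemma convex_gradient_le (v w : 'rV[R]_n) : f v + dotv (g v) (w - v) <= f w.
Proof.
set d := w - v; suff : dotv (g v) d <= f w - f v by lra.
have K_ge0 : 0 <= L / 2 * dotv d d by rewrite mulr_ge0 ?dotvv_ge0 ?divr_ge0 ?ltW.
apply: (ler_of_le_addr_small _ _ _ K_ge0) => t /andP[t_gt0 t_le1].
have := f_convex w v t (ltW t_gt0) t_le1.
rewrite (_ : t *: w + (1 - t) *: v = v + t *: d); last first.
  by apply/rowP => i; rewrite !mxE; ring.
have := abs_taylor1_le v (t *: d); rewrite ler_norml => /andP[taylor_lo _].
have lin : dotv (g v) (t *: d) = t * dotv (g v) d by expand_dotv; ring.
have quad : dotv (t *: d) (t *: d) = t ^+ 2 * dotv d d by expand_dotv; ring.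
move=> conv; have : t * (dotv (g v) d - (f w - f v + t * (L / 2 * dotv d d))) <= 0.
  by nra.
by rewrite pmulr_rle0 // subr_le0.
Qed.

Lemma cocoercive_le (u v : 'rV[R]_n) :
  f v + dotv (g v) (u - v) + dotv (g u - g v) (g u - g v) / (2 * L) <= f u.
Proof.
(* Bound f w, for w := u - (g u - g v) / L, from below by convexity at v and
   from above by the quadratic bound at u. *)
have L_neq0 : L != 0 by rewrite gt_eqF.
set w := u - L^-1 *: (g u - g v).
have conv := convex_gradient_le v w.
have := abs_taylor1_le u (w - u).
rewrite [u + _]addrC subrK ler_norml => /andP[_ taylor_up].
set P := dotv (g u) (g u - g v) in conv taylor_up.
set Q := dotv (g v) (g u - g v) in conv taylor_up.
have e1 : dotv (g v) (w - v) = dotv (g v) (u - v) - L^-1 * Q by expand_dotv; ring.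
have e2 : dotv (g u) (w - u) = - (L^-1 * P) by expand_dotv; ring.
have e3 : L / 2 * dotv (w - u) (w - u) = L^-1 / 2 * (P - Q) by expand_dotv; field.
have e4 : dotv (g u - g v) (g u - g v) / (2 * L) = L^-1 / 2 * (P - Q).
  by rewrite (_ : dotv _ _ = P - Q); [field | expand_dotv; ring].
lra.
Qed.

Lemma gradient_min_eq0 : g xs = 0.
Proof.
apply/eqP; rewrite -dotvv_le0.
have := abs_taylor1_le xs (- L^-1 *: g xs); rewrite ler_norml => /andP[_ taylor_up].
have := xs_min (xs + - L^-1 *: g xs).
have e1 : dotv (g xs) (- L^-1 *: g xs) = - L^-1 * dotv (g xs) (g xs) by expand_dotv; ring.
have e2 : L / 2 * dotv (- L^-1 *: g xs) (- L^-1 *: g xs) = L^-1 / 2 * dotv (g xs) (g xs).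
  by expand_dotv; field; rewrite gt_eqF.
move=> min_le; have : L^-1 * dotv (g xs) (g xs) <= 0 by lra.
by rewrite pmulr_rle0 // invr_gt0.
Qed.

Lemma cocoercive_min_le (u : 'rV[R]_n) :
  f u + dotv (g u) (xs - u) + dotv (g u) (g u) / (2 * L) <= f xs.
Proof.
have := cocoercive_le xs u; rewrite gradient_min_eq0.
by rewrite (_ : dotv (0 - g u) (0 - g u) = dotv (g u) (g u)) //; expand_dotv; ring.
Qed.

Definition ogm_gap (x : 'rV[R]_n) := f x - f xs - dotv (g x) (g x) / (2 * L).

Lemma ogm_gap_ge0 x : 0 <= ogm_gap x.
Proof.
have := cocoercive_le x xs; rewrite gradient_min_eq0 dotv0l subr0 /ogm_gap; lra.
Qed.

Lemma ogm_potential_step (x xp z : 'rV[R]_n) (th thp : R) :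
  1 <= th -> th ^+ 2 - th <= thp ^+ 2 ->
  z = th *: x - (th - 1) *: (xp - L^-1 *: g xp) ->
  2 * th ^+ 2 * ogm_gap x
    + L / 2 * dotv (z - (2 * th / L) *: g x - xs) (z - (2 * th / L) *: g x - xs)
  <= 2 * thp ^+ 2 * ogm_gap xp + L / 2 * dotv (z - xs) (z - xs).
Proof.
move=> th_ge1 th_le z_def.
have L_neq0 : L != 0 by rewrite gt_eqF.
have div2L r : r / (2 * L) = L^-1 / 2 * r by field.
have opt := cocoercive_min_le x.
have coco := cocoercive_le xp x.
have gap_ge0 := ogm_gap_ge0 xp.
rewrite /ogm_gap !div2L in opt coco gap_ge0 *.
have shiftE : L / 2 * dotv (z - (2 * th / L) *: g x - xs) (z - (2 * th / L) *: g x - xs)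
    = L / 2 * dotv (z - xs) (z - xs) - 2 * th * dotv (g x) (z - xs)
      + 2 * th ^+ 2 * L^-1 * dotv (g x) (g x) by expand_dotv; field.
have zE : dotv (g x) (z - xs) = - dotv (g x) (xs - x)
    + (th - 1) * (- dotv (g x) (xp - x) + L^-1 * dotv (g x) (g xp)).
  by rewrite z_def; expand_dotv; ring.
have gradE : dotv (g xp - g x) (g xp - g x)
    = dotv (g xp) (g xp) - 2 * dotv (g x) (g xp) + dotv (g x) (g x) by expand_dotv; ring.
rewrite shiftE zE; rewrite gradE in coco.
have opt_w : 0 <= 2 * th * (f xs - (f x + dotv (g x) (xs - x)
    + L^-1 / 2 * dotv (g x) (g x))) by apply: mulr_ge0; lra.
have coco_w : 0 <= 2 * th * (th - 1) * (f xp - (f x + dotv (g x) (xp - x)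
    + L^-1 / 2 * (dotv (g xp) (g xp) - 2 * dotv (g x) (g xp) + dotv (g x) (g x)))).
  by apply: mulr_ge0; [apply: mulr_ge0|]; lra.
have gap_w : 0 <= 2 * (thp ^+ 2 - (th ^+ 2 - th))
    * (f xp - f xs - L^-1 / 2 * dotv (g xp) (g xp)) by apply: mulr_ge0; lra.
lra.
Qed.

Lemma ogm_last_step_le (x z xt : 'rV[R]_n) (phi : R) : 1 <= phi ->
  phi *: xt = (phi - 1) *: (x - L^-1 *: g x) + z ->
  phi ^+ 2 * (f xt - f xs)
    <= (phi ^+ 2 - phi) * ogm_gap x + L / 2 * dotv (z - xs) (z - xs).
Proof.
move=> phi_ge1 xt_def.
have L_neq0 : L != 0 by rewrite gt_eqF.
have div2L r : r / (2 * L) = L^-1 / 2 * r by field.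
have coco := cocoercive_le x xt.
have opt := cocoercive_min_le xt.
rewrite /ogm_gap !div2L in coco opt *.
set gt := g xt in coco opt *.
set w := z - xs - (phi * L^-1) *: gt.
have w_ge0 : 0 <= L / 2 * dotv w w by rewrite mulr_ge0 ?dotvv_ge0 ?divr_ge0 ?ltW.
have wE : L / 2 * dotv w w = L / 2 * dotv (z - xs) (z - xs)
    - phi * (dotv gt z - dotv gt xs) + phi ^+ 2 * L^-1 / 2 * dotv gt gt.
  by expand_dotv; field.
have e1 : dotv gt (x - xt) = dotv gt x - dotv gt xt by expand_dotv; ring.
have e2 : dotv (g x - gt) (g x - gt) = dotv (g x) (g x) - 2 * dotv gt (g x) + dotv gt gt.
  by expand_dotv; ring.
have e3 : dotv gt (xs - xt) = dotv gt xs - dotv gt xt by expand_dotv; ring.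
have xtE : phi ^+ 2 * dotv gt xt
    = phi * ((phi - 1) * (dotv gt x - L^-1 * dotv gt (g x)) + dotv gt z).
  rewrite expr2 -mulrA; congr (_ * _).
  have -> : phi * dotv gt xt = dotv gt (phi *: xt) by expand_dotv; ring.
  by rewrite xt_def; expand_dotv; ring.
rewrite e1 e2 in coco; rewrite e3 in opt; rewrite wE in w_ge0.
have coco_w : 0 <= phi * (phi - 1) * (f x - (f xt + (dotv gt x - dotv gt xt)
    + L^-1 / 2 * (dotv (g x) (g x) - 2 * dotv gt (g x) + dotv gt gt))).
  by apply: mulr_ge0; [apply: mulr_ge0|]; lra.
have opt_w : 0 <= phi * (f xs - (f xt + (dotv gt xs - dotv gt xt)
    + L^-1 / 2 * dotv gt gt)) by apply: mulr_ge0; lra.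
lra.
Qed.

Context {theta : nat -> R} (x0 : 'rV[R]_n).
Hypothesis theta_gt0 : forall k, 0 < theta k.
Hypothesis theta0 : theta 0%N = 1.
Hypothesis theta_rec : forall k,
  0 <= theta k.+1 ^+ 2 - theta k.+1 /\ theta k.+1 ^+ 2 - theta k.+1 <= theta k ^+ 2.

Local Notation x k := (ogm_xy g L theta x0 k).1.
Local Notation y k := (ogm_xy g L theta x0 k).2.

Lemma theta_ge1 k : 1 <= theta k.
Proof.
by case: k => [|k]; [rewrite theta0 | exact: ge1_of_sqr_sub_ge0 (theta_rec k).1].
Qed.

Lemma theta_sqr_sub_le k : theta k ^+ 2 - theta k <= prev_theta theta k ^+ 2.
Proof.
by case: k => [|k]; [rewrite theta0 /= expr1n subrr expr0n | exact: (theta_rec k).2].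
Qed.

Definition ogm_z k := theta k *: x k - (theta k - 1) *: y k.

Lemma ogm_zE k :
  ogm_z k = theta k *: x k - (theta k - 1) *: (x k.-1 - L^-1 *: g (x k.-1)).
Proof. by case: k => [|k] //; rewrite /ogm_z theta0 subrr !scale0r. Qed.

Lemma ogm_z0 : ogm_z 0 = x0.
Proof. by rewrite /ogm_z theta0 subrr scale0r subr0 scale1r. Qed.

Lemma ogm_zS k : ogm_z k.+1 = ogm_z k - (2 * theta k / L) *: g (x k).
Proof.
rewrite /ogm_z /=; apply/rowP => i; rewrite !mxE; field.
by rewrite gt_eqF // gt_eqF.
Qed.

(* For k = 0 the first term vanishes since theta_(-1) = 0, and x (0.-1) = x0
   is only a placeholder. *)
Definition ogm_potential k := 2 * prev_theta theta k ^+ 2 * ogm_gap (x k.-1)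
  + L / 2 * dotv (ogm_z k - xs) (ogm_z k - xs).

Lemma ogm_potential_le k : ogm_potential k <= L / 2 * dotv (x0 - xs) (x0 - xs).
Proof.
elim: k => [|k IH]; first by rewrite /ogm_potential ogm_z0 expr0n /= mulr0 mul0r add0r.
apply: le_trans IH; rewrite /ogm_potential ogm_zS /=.
exact: ogm_potential_step (theta_ge1 k) (theta_sqr_sub_le k) (ogm_zE k).
Qed.

Lemma ogm_xtE (phi : nat -> R) k : phi 0%N = 1 -> phi k != 0 ->
  phi k *: ogm_xt g L theta phi x0 k
    = (phi k - 1) *: (x k.-1 - L^-1 *: g (x k.-1)) + ogm_z k.
Proof.
case: k => [phi0 _|k _ phi_neq0].
  by rewrite ogm_z0 phi0 subrr scale0r add0r scale1r.
rewrite /ogm_z /ogm_xt /=; apply/rowP => i; rewrite !mxE; field.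
by rewrite phi_neq0 !gt_eqF.
Qed.

End OptimizedGradient.

Theorem theorem2 (R : realType) (n : nat) (f : 'rV[R]_n -> R)
  (g : 'rV[R]_n -> 'rV[R]_n) (L : R) (xs : 'rV[R]_n)
  (theta phi : nat -> R) (x0 : 'rV[R]_n) :
  convex_fun f ->
  is_gradient f g ->
  0 < L ->
  (forall x y, enorm (g x - g y) <= L * enorm (x - y)) ->
  (forall x, f xs <= f x) ->
  (forall k, 0 < theta k) ->
  theta 0%N = 1 ->
  (forall k, 0 <= theta k.+1 ^+ 2 - theta k.+1 /\
             theta k.+1 ^+ 2 - theta k.+1 <= theta k ^+ 2) ->
  (forall k, 0 < phi k) ->
  (forall k, 0 <= phi k ^+ 2 - phi k /\
             phi k ^+ 2 - phi k <= 2 * prev_theta theta k ^+ 2) ->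
  forall k : nat,
    f (ogm_xt g L theta phi x0 k) - f xs
      <= L * enorm (x0 - xs) ^+ 2 / (2 * phi k ^+ 2).
Proof.
move=> f_convex f_grad L_gt0 g_lip xs_min theta_gt0 theta0 theta_rec phi_gt0 phi_rec k.
have phi_ge1 j : 1 <= phi j by exact: ge1_of_sqr_sub_ge0 (phi_gt0 j) (phi_rec j).1.
have phi0 : phi 0%N = 1.
  by have := (phi_rec 0%N).2; have := phi_ge1 0%N; rewrite /= expr0n mulr0; nra.
have last_step := ogm_last_step_le f_convex f_grad L_gt0 g_lip xs_min _ _ _ _
  (phi_ge1 k) (ogm_xtE L_gt0 x0 theta_gt0 theta0 phi k phi0 (lt0r_neq0 (phi_gt0 k))).
have potential := ogm_potential_le f_convex f_grad L_gt0 g_lip xs_min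
  x0 theta_gt0 theta0 theta_rec k.
have gap_le := ler_wpM2r (ogm_gap_ge0 f_convex f_grad L_gt0 g_lip xs_min
  (ogm_xy g L theta x0 k.-1).1) (phi_rec k).2.
rewrite /ogm_potential in potential.
rewrite sqr_enorm ler_pdivlMr ?mulr_gt0 ?exprn_gt0 //; lra.
Qed.
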